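(* Let $X$ and $Y$ be discrete random variables with finite support. Let $\mathbf{p}$ be the distribution of $X$ and $\mathbf{q}$ the distribution of $Y$, each written as a vector sorted in nonincreasing order, with the shorter vector padded with zeros to the common length. If $H(Y\mid X)=0$, then $$H(X)\geq H(Y)+D(\mathbf{q}\,\|\,\mathbf{p}).$$ Equivalently, for every function $f$ one has $H(X)\geq H(f(X))+D(\mathbf{q}\|\mathbf{p})$, where $\mathbf{q}$ is the sorted distribution of $f(X)$.
   Context: $H$ denotes Shannon entropy in bits. $D(\mathbf{b}\|\mathbf{a})=\sum_i b_i\log_2(b_i/a_i)$ is the relative entropy, computed componentwise on the sorted and padded vectors, with the convention $0\log(0/a)=0$. *)

From Stdlib Require Import Reals List.
Import ListNotations.
Open Scope R_scope.

Definition log2 (x : R) : R := ln x / ln 2.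

Definition sumR (l : list R) : R := fold_right Rplus 0 l.

Definition plogp (x : R) : R := if Rle_dec x 0 then 0 else x * log2 x.

Definition entropy (l : list R) : R := - sumR (map plogp l).

(** A joint pmf of (X,Y): X takes values in {0..m-1}, Y in {0..n-1},
    P i j = Pr[X = i, Y = j]. *)
Definition is_joint_pmf (m n : nat) (P : nat -> nat -> R) : Prop :=
  (forall i j, (i < m)%nat -> (j < n)%nat -> 0 <= P i j) /\
  sumR (map (fun i => sumR (map (fun j => P i j) (seq 0 n))) (seq 0 m)) = 1.

Definition marg_X (m n : nat) (P : nat -> nat -> R) : list R :=
  map (fun i => sumR (map (fun j => P i j) (seq 0 n))) (seq 0 m).
Definition marg_Y (m n : nat) (P : nat -> nat -> R) : list R :=
  map (fun j => sumR (map (fun i => P i j) (seq 0 m))) (seq 0 n).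

Definition cond_entropy (m n : nat) (P : nat -> nat -> R) : R :=
  - sumR (map (fun i =>
        let px := sumR (map (fun j => P i j) (seq 0 n)) in
        sumR (map (fun j => if Rle_dec (P i j) 0 then 0
                            else P i j * log2 (P i j / px)) (seq 0 n)))
      (seq 0 m)).

Fixpoint insert_desc (x : R) (l : list R) : list R :=
  match l with
  | [] => [x]
  | y :: t => if Rle_dec y x then x :: y :: t else y :: insert_desc x t
  end.
Fixpoint sort_desc (l : list R) : list R :=
  match l with
  | [] => []
  | x :: t => insert_desc x (sort_desc t)
  end.

Definition pad (len : nat) (l : list R) : list R :=
  l ++ repeat 0 (len - length l).

Definition relent (b a : list R) : R :=
  sumR (map (fun ba => let '(bi, ai) := ba in
                       if Rle_dec bi 0 then 0 else bi * log2 (bi / ai))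
            (combine b a)).

Definition common_len (m n : nat) : nat := Nat.max m n.
Definition pvec (m n : nat) (P : nat -> nat -> R) : list R :=
  pad (common_len m n) (sort_desc (marg_X m n P)).
Definition qvec (m n : nat) (P : nat -> nat -> R) : list R :=
  pad (common_len m n) (sort_desc (marg_Y m n P)).

From Stdlib Require Import Reals List Permutation Sorting Lra Lia.
Open Scope R_scope.

(* Since H(Y|X) = 0, each row of the joint pmf puts its whole mass Pr[X = i] in one column, so the
   distribution q of Y arises from p by merging atoms. Merging can only increase the hinge sums
   sum_k (x_k - c)_+ for c >= 0, and for sorted vectors this says that q majorizes p: every prefix
   sum of q dominates the corresponding one of p. On the support of q we then have
   H(p) - H(q) - D(q||p) = sum_k (q_k - p_k) log p_k, which is nonnegative by Abel summation since
   log p_k is nonincreasing and the prefix sums of q - p are nonnegative with total zero. *)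

Definition sumn (f : nat -> R) (n : nat) : R := sumR (map f (seq 0 n)).

Lemma sumR_app l1 l2 : sumR (l1 ++ l2) = sumR l1 + sumR l2.
Proof. induction l1 as [|x l IH]; simpl; [lra|]. rewrite IH; lra. Qed.

Lemma sumR_perm l l' : Permutation l l' -> sumR l = sumR l'.
Proof. induction 1; simpl; lra. Qed.

Lemma sumR_map_nth {A : Type} (d : A) (g : A -> R) l :
  sumR (map g l) = sumn (fun k => g (nth k l d)) (length l).
Proof.
  induction l as [|x l IH]; [reflexivity|].
  unfold sumn; simpl. rewrite <- seq_shift, map_map. simpl. f_equal. exact IH.
Qed.

Lemma sumn_S f n : sumn f (S n) = sumn f n + f n.
Proof. unfold sumn. rewrite seq_S, map_app, sumR_app. simpl. lra. Qed.

Lemma sumn_ext f g n : (forall k, (k < n)%nat -> f k = g k) -> sumn f n = sumn g n.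
Proof.
  induction n; intros H; [reflexivity|].
  rewrite !sumn_S, (H n) by lia. f_equal. apply IHn. intros; apply H; lia.
Qed.

Lemma sumn_le f g n : (forall k, (k < n)%nat -> f k <= g k) -> sumn f n <= sumn g n.
Proof.
  induction n; intros H; [unfold sumn; simpl; lra|]. rewrite !sumn_S.
  apply Rplus_le_compat; [apply IHn; intros; apply H|apply H]; lia.
Qed.

Lemma sumn_add f g n : sumn (fun k => f k + g k) n = sumn f n + sumn g n.
Proof. induction n; [unfold sumn; simpl; lra|]. rewrite !sumn_S, IHn. lra. Qed.

Lemma sumn_sub f g n : sumn (fun k => f k - g k) n = sumn f n - sumn g n.
Proof. induction n; [unfold sumn; simpl; lra|]. rewrite !sumn_S, IHn. lra. Qed.

Lemma sumn_scal c f n : sumn (fun k => c * f k) n = c * sumn f n.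
Proof. induction n; [unfold sumn; simpl; lra|]. rewrite !sumn_S, IHn. lra. Qed.

Lemma sumn_const c n : sumn (fun _ => c) n = INR n * c.
Proof. induction n; [unfold sumn; simpl; lra|]. rewrite sumn_S, IHn, S_INR. lra. Qed.

Lemma sumn_nonneg f n : (forall k, (k < n)%nat -> 0 <= f k) -> 0 <= sumn f n.
Proof.
  induction n; intros H; [unfold sumn; simpl; lra|]. rewrite sumn_S.
  apply Rplus_le_le_0_compat; [apply IHn; intros; apply H|apply H]; lia.
Qed.

Lemma sumn_nonpos f n : (forall k, (k < n)%nat -> f k <= 0) -> sumn f n <= 0.
Proof.
  induction n; intros H; [unfold sumn; simpl; lra|]. rewrite sumn_S.
  assert (sumn f n <= 0) by (apply IHn; intros; apply H; lia).
  assert (f n <= 0) by (apply H; lia). lra.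
Qed.

Lemma sumn_eq0_nonpos f n : (forall k, (k < n)%nat -> f k <= 0) -> sumn f n = 0 ->
  forall k, (k < n)%nat -> f k = 0.
Proof.
  induction n; intros Hf H0 k Hk; [lia|]. rewrite sumn_S in H0.
  assert (sumn f n <= 0) by (apply sumn_nonpos; intros; apply Hf; lia).
  assert (f n <= 0) by (apply Hf; lia).
  destruct (Nat.eq_dec k n) as [->|]; [lra|].
  apply IHn; [intros; apply Hf|lra|]; lia.
Qed.

Lemma sumn_term_le f n k : (forall j, (j < n)%nat -> 0 <= f j) -> (k < n)%nat ->
  f k <= sumn f n.
Proof.
  induction n; intros Hf Hk; [lia|]. rewrite sumn_S.
  assert (0 <= sumn f n) by (apply sumn_nonneg; intros; apply Hf; lia).
  destruct (Nat.eq_dec k n) as [->|]; [lra|].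
  assert (f k <= sumn f n) by (apply IHn; [intros; apply Hf|]; lia).
  assert (0 <= f n) by (apply Hf; lia). lra.
Qed.

Lemma sumn_pos_ex f n : 0 < sumn f n -> exists k, (k < n)%nat /\ 0 < f k.
Proof.
  induction n; intros H; [unfold sumn in H; simpl in H; lra|]. rewrite sumn_S in H.
  destruct (Rlt_dec 0 (f n)) as [Hn|Hn]; [exists n; split; [lia|exact Hn]|].
  destruct IHn as [k [Hk Hfk]]; [lra|]. exists k; split; [lia|exact Hfk].
Qed.

Lemma sumn_prefix_le f t n : (forall k, 0 <= f k) -> (t <= n)%nat -> sumn f t <= sumn f n.
Proof.
  intros Hf Htn. induction Htn as [|n _ IH]; [lra|].
  rewrite sumn_S. specialize (Hf n). lra.
Qed.

Lemma sumn_tail_zero f t n : (t <= n)%nat -> (forall k, (t <= k < n)%nat -> f k = 0) ->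
  sumn f n = sumn f t.
Proof.
  intros Htn. induction Htn as [|n Htn IH]; intros Hf; [reflexivity|].
  rewrite sumn_S, (Hf n) by lia. rewrite IH; [lra|].
  intros k Hk; apply Hf; lia.
Qed.

Lemma sumn_swap (g : nat -> nat -> R) m n :
  sumn (fun i => sumn (g i) n) m = sumn (fun j => sumn (fun i => g i j) m) n.
Proof.
  induction m.
  - unfold sumn at 1. simpl. rewrite <- (Rmult_0_r (INR n)), <- sumn_const.
    apply sumn_ext. reflexivity.
  - rewrite sumn_S, IHm, <- sumn_add. apply sumn_ext. intros. rewrite sumn_S. reflexivity.
Qed.

Lemma insert_desc_perm x l : Permutation (insert_desc x l) (x :: l).
Proof.
  induction l as [|y t IH]; simpl; [auto|].
  destruct (Rle_dec y x); [auto|].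
  eapply perm_trans; [apply perm_skip, IH|]. apply perm_swap.
Qed.

Lemma sort_desc_perm l : Permutation (sort_desc l) l.
Proof. induction l; simpl; [auto|]. eapply perm_trans; [apply insert_desc_perm|]. auto. Qed.

Lemma insert_desc_sorted x l : StronglySorted Rge l -> StronglySorted Rge (insert_desc x l).
Proof.
  induction l as [|y t IH]; intros H; simpl; [repeat constructor|].
  apply StronglySorted_inv in H as [Ht Hy]. destruct (Rle_dec y x).
  - constructor; [constructor; auto|]. constructor; [lra|].
    eapply Forall_impl; [|exact Hy]. simpl; intros; lra.
  - constructor; [auto|]. eapply Permutation_Forall; [apply Permutation_sym, insert_desc_perm|].
    constructor; [lra|auto].
Qed.

Lemma sort_desc_sorted l : StronglySorted Rge (sort_desc l).
Proof. induction l; simpl; [constructor|]. apply insert_desc_sorted; auto. Qed.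

Lemma nth_pad N l k : nth k (pad N l) 0 = nth k l 0.
Proof.
  unfold pad. destruct (Nat.lt_ge_cases k (length l)).
  - apply app_nth1; auto.
  - rewrite app_nth2, (nth_overflow l) by auto. apply nth_repeat.
Qed.

Lemma length_pad N l : (length l <= N)%nat -> length (pad N l) = N.
Proof. intros. unfold pad. rewrite length_app, repeat_length. lia. Qed.

Section SortedPadded.

Variables (N : nat) (l : list R).
Hypothesis l_nonneg : forall x, In x l -> 0 <= x.

Lemma sort_pad_nonneg k : 0 <= nth k (pad N (sort_desc l)) 0.
Proof.
  rewrite nth_pad. destruct (Nat.lt_ge_cases k (length (sort_desc l))).
  - apply l_nonneg, (Permutation_in _ (sort_desc_perm l)), nth_In; auto.
  - rewrite nth_overflow by auto. lra.
Qed.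

Lemma sort_pad_antitone i j :
  (i <= j)%nat -> nth j (pad N (sort_desc l)) 0 <= nth i (pad N (sort_desc l)) 0.
Proof.
  rewrite !nth_pad.
  assert (Hpos : forall x, In x (sort_desc l) -> 0 <= x)
    by (intros x Hx; apply l_nonneg, (Permutation_in _ (sort_desc_perm l)), Hx).
  generalize (sort_desc_sorted l). revert i j Hpos. induction (sort_desc l) as [|x t IH];
    intros i j Hpos HS Hij; [destruct i, j; simpl; lra|].
  apply StronglySorted_inv in HS as [HS Hx]. destruct i, j; simpl; try lia.
  - lra.
  - destruct (Nat.lt_ge_cases j (length t)).
    + rewrite Forall_forall in Hx. specialize (Hx _ (nth_In _ 0 H)). lra.
    + rewrite nth_overflow by auto. apply Hpos; left; auto.
  - apply IH; auto; [intros; apply Hpos; right; auto|lia].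
Qed.

End SortedPadded.

Lemma sumR_map_sort_pad N l (g : R -> R) : (length l <= N)%nat -> g 0 = 0 ->
  sumR (map g l) = sumn (fun k => g (nth k (pad N (sort_desc l)) 0)) N.
Proof.
  intros l_short Hg0.
  rewrite (sumR_perm _ (map g (sort_desc l)))
    by apply Permutation_map, Permutation_sym, sort_desc_perm.
  rewrite (sumR_map_nth 0), (Permutation_length (sort_desc_perm l)).
  rewrite (sumn_tail_zero _ (length l) N l_short).
  - apply sumn_ext. intros k _. rewrite nth_pad. reflexivity.
  - intros k Hk. rewrite nth_pad, nth_overflow; [exact Hg0|].
    rewrite (Permutation_length (sort_desc_perm l)). lia.
Qed.

Lemma sumn_sort_pad N l : (length l <= N)%nat ->
  sumn (fun k => nth k (pad N (sort_desc l)) 0) N = sumR l.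
Proof.
  intros HlN. symmetry.
  replace (sumR l) with (sumR (map (fun x => x) l)) by (rewrite map_id; reflexivity).
  exact (sumR_map_sort_pad N l (fun x => x) HlN eq_refl).
Qed.

Lemma length_sort_pad N l : (length l <= N)%nat -> length (pad N (sort_desc l)) = N.
Proof.
  intros HlN. apply length_pad. rewrite (Permutation_length (sort_desc_perm l)). exact HlN.
Qed.

(** * Majorization from hinge sums *)

Definition hinge (c x : R) : R := Rmax 0 (x - c).

Lemma hinge_nonneg c x : 0 <= hinge c x.
Proof. apply Rmax_l. Qed.

Lemma hinge_0 c : 0 <= c -> hinge c 0 = 0.
Proof. intros. apply Rmax_left. lra. Qed.

Lemma hinge_le_id c x : x <= c + hinge c x.
Proof. unfold hinge. apply Rmax_case_strong; intros; lra. Qed.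

Lemma hinge_add_ge c x y : 0 <= c -> 0 <= x -> 0 <= y ->
  hinge c x + hinge c y <= hinge c (x + y).
Proof. intros. unfold hinge. repeat (apply Rmax_case_strong; intros); lra. Qed.

Lemma sumn_hinge_le c f n : 0 <= c -> (forall k, (k < n)%nat -> 0 <= f k) ->
  sumn (fun k => hinge c (f k)) n <= hinge c (sumn f n).
Proof.
  intros Hc. induction n; intros Hf; [unfold sumn; simpl; rewrite hinge_0; lra|].
  rewrite !sumn_S.
  assert (sumn (fun k => hinge c (f k)) n <= hinge c (sumn f n))
    by (apply IHn; intros; apply Hf; lia).
  assert (hinge c (sumn f n) + hinge c (f n) <= hinge c (sumn f n + f n)).
  { apply hinge_add_ge; [exact Hc| |apply Hf; lia]. apply sumn_nonneg; intros; apply Hf; lia. }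
  lra.
Qed.

Section Majorization.

Variables (N : nat) (L Q : nat -> R).
Hypothesis L_nonneg : forall k, 0 <= L k.
Hypothesis Q_nonneg : forall k, 0 <= Q k.

(* For c := Q t the hinge sum of the nonincreasing Q is exactly sumn Q (t+1) - (t+1) c, while
   that of L is at least sumn L (t+1) - (t+1) c. *)
Lemma majorized_of_sumn_hinge_le :
  (forall i j, (i <= j)%nat -> Q j <= Q i) ->
  (forall c, 0 <= c -> sumn (fun k => hinge c (L k)) N <= sumn (fun k => hinge c (Q k)) N) ->
  forall t, (t <= N)%nat -> sumn L t <= sumn Q t.
Proof.
  intros HQ Hhinge [|t] Ht; [unfold sumn; simpl; lra|].
  set (c := Q t).
  assert (HL : sumn L (S t) <= INR (S t) * c + sumn (fun k => hinge c (L k)) N).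
  { rewrite <- sumn_const.
    apply Rle_trans with (sumn (fun k => c + hinge c (L k)) (S t)).
    - apply sumn_le; intros; apply hinge_le_id.
    - rewrite sumn_add. apply Rplus_le_compat_l.
      apply sumn_prefix_le; [intros; apply hinge_nonneg|exact Ht]. }
  assert (HQt : sumn (fun k => hinge c (Q k)) N = sumn Q (S t) - INR (S t) * c).
  { rewrite (sumn_tail_zero _ (S t) N Ht).
    - rewrite <- sumn_const, <- sumn_sub. apply sumn_ext. intros k Hk.
      apply Rmax_right. assert (Q t <= Q k) by (apply HQ; lia). unfold c; lra.
    - intros k Hk. apply Rmax_left. assert (Q k <= Q t) by (apply HQ; lia). unfold c; lra. }
  specialize (Hhinge c (Q_nonneg t)). lra.
Qed.

Hypothesis L_antitone : forall i j, (i <= j)%nat -> L j <= L i.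
Hypothesis majorized : forall t, (t <= N)%nat -> sumn L t <= sumn Q t.
Hypothesis sumn_eq : sumn L N = sumn Q N.

Lemma majorized_pos k : (k < N)%nat -> 0 < Q k -> 0 < L k.
Proof.
  intros Hk HQk. destruct (Rlt_dec 0 (L k)) as [|HLk]; [assumption|exfalso].
  assert (HLN : sumn L N = sumn L k).
  { apply sumn_tail_zero; [lia|]. intros j Hj.
    assert (L j <= L k) by (apply L_antitone; lia). specialize (L_nonneg j). lra. }
  assert (sumn Q (S k) <= sumn Q N) by (apply sumn_prefix_le; auto).
  assert (sumn L k <= sumn Q k) by (apply majorized; lia).
  rewrite sumn_S in H. lra.
Qed.

End Majorization.

Lemma sort_pad_majorized N lx ly :
  (forall x, In x lx -> 0 <= x) -> (forall y, In y ly -> 0 <= y) ->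
  (length lx <= N)%nat -> (length ly <= N)%nat ->
  (forall c, 0 <= c -> sumR (map (hinge c) lx) <= sumR (map (hinge c) ly)) ->
  forall t, (t <= N)%nat ->
  sumn (fun k => nth k (pad N (sort_desc lx)) 0) t
  <= sumn (fun k => nth k (pad N (sort_desc ly)) 0) t.
Proof.
  intros Hx Hy HxN HyN Hhinge.
  apply majorized_of_sumn_hinge_le;
    [exact (sort_pad_nonneg N ly Hy)|exact (sort_pad_antitone N ly Hy)|].
  intros c Hc. rewrite <- !(sumR_map_sort_pad N) by (assumption || apply hinge_0; assumption).
  apply Hhinge, Hc.
Qed.

(** * Entropy of a majorized vector *)

Lemma abel_sumn_nonneg n (d b : nat -> R) :
  (forall k k', (k <= k' < n)%nat -> b k' <= b k) -> (forall k, (k < n)%nat -> 0 <= b k) ->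
  (forall t, (t <= n)%nat -> 0 <= sumn d t) -> 0 <= sumn (fun k => d k * b k) n.
Proof.
  revert d b. induction n; intros d b Hb Hb0 Hd; [unfold sumn; simpl; lra|].
  rewrite sumn_S.
  assert (E : sumn (fun k => d k * b k) n
              = sumn (fun k => d k * (b k - b n)) n + b n * sumn d n).
  { rewrite <- sumn_scal, <- sumn_add. apply sumn_ext. intros; ring. }
  assert (0 <= sumn (fun k => d k * (b k - b n)) n).
  { apply IHn; intros.
    - assert (b k' <= b k) by (apply Hb; lia). lra.
    - assert (b n <= b k) by (apply Hb; lia). lra.
    - apply Hd; lia. }
  assert (Hdn : 0 <= sumn d (S n)) by (apply Hd; lia). rewrite sumn_S in Hdn.
  assert (0 <= b n * (sumn d n + d n)) by (apply Rmult_le_pos; [apply Hb0; lia|lra]).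
  rewrite E. lra.
Qed.

(* Summation by parts: shifting b by its last value removes the sign condition on b. *)
Lemma abel_sumn_nonneg_balanced n (d b : nat -> R) :
  (forall k k', (k <= k' < n)%nat -> b k' <= b k) ->
  (forall t, (t <= n)%nat -> 0 <= sumn d t) -> sumn d n = 0 ->
  0 <= sumn (fun k => d k * b k) n.
Proof.
  intros Hb Hd Hd0. destruct n as [|n]; [unfold sumn; simpl; lra|].
  assert (E : sumn (fun k => d k * b k) (S n)
              = sumn (fun k => d k * (b k - b n)) (S n) + b n * sumn d (S n)).
  { rewrite <- sumn_scal, <- sumn_add. apply sumn_ext. intros; ring. }
  rewrite E, Hd0, Rmult_0_r, Rplus_0_r. apply abel_sumn_nonneg; auto; intros.
  - assert (b k' <= b k) by (apply Hb; lia). lra.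
  - assert (b n <= b k) by (apply Hb; lia). lra.
Qed.

Lemma plogp_0 : plogp 0 = 0.
Proof. unfold plogp. destruct (Rle_dec 0 0); lra. Qed.

Lemma ln2_pos : 0 < ln 2.
Proof. rewrite <- ln_1. apply ln_increasing; lra. Qed.

Lemma log2_le x y : 0 < x -> x <= y -> log2 x <= log2 y.
Proof.
  intros Hx Hxy. unfold log2. apply Rmult_le_compat_r; [left; apply Rinv_0_lt_compat, ln2_pos|].
  destruct (Rle_lt_or_eq_dec _ _ Hxy) as [Hlt|<-]; [left; apply ln_increasing|]; lra.
Qed.

Lemma log2_div x y : 0 < x -> 0 < y -> log2 (x / y) = log2 x - log2 y.
Proof.
  intros. unfold log2, Rdiv. rewrite ln_mult, ln_Rinv by (auto; apply Rinv_0_lt_compat; auto).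
  ring.
Qed.

Lemma log2_le0 x : 0 < x -> x <= 1 -> log2 x <= 0.
Proof.
  intros. replace 0 with (log2 1) by (unfold log2; rewrite ln_1; lra). apply log2_le; auto.
Qed.

Lemma log2_eq0 x : 0 < x -> log2 x = 0 -> x = 1.
Proof.
  intros Hx H. destruct (Req_dec x 1) as [|Hx1]; [assumption|exfalso].
  apply (ln_neq_0 x Hx1 Hx). unfold log2 in H.
  apply (Rmult_eq_compat_r (ln 2)) in H. unfold Rdiv in H.
  rewrite Rmult_assoc, Rinv_l, Rmult_0_l in H by (apply Rgt_not_eq, ln2_pos). lra.
Qed.

Lemma pos_lower_bound (f : nat -> R) n :
  exists e, 0 < e /\ forall k, (k < n)%nat -> 0 < f k -> e <= f k.
Proof.
  induction n as [|n [e [He Hf]]]; [exists 1; split; [lra|intros; lia]|].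
  destruct (Rlt_dec 0 (f n)) as [Hn|Hn].
  - exists (Rmin e (f n)). split; [apply Rmin_case; lra|].
    intros k Hk Hfk. destruct (Nat.eq_dec k n) as [->|]; [apply Rmin_r|].
    eapply Rle_trans; [apply Rmin_l|]. apply Hf; [lia|exact Hfk].
  - exists e. split; [exact He|]. intros k Hk Hfk. destruct (Nat.eq_dec k n) as [->|]; [lra|].
    apply Hf; [lia|exact Hfk].
Qed.

Definition relent_term (b a : R) : R := if Rle_dec b 0 then 0 else b * log2 (b / a).

Section EntropyOfMajorized.

Variables (N : nat) (L Q : nat -> R).
Hypothesis L_nonneg : forall k, 0 <= L k.
Hypothesis Q_nonneg : forall k, 0 <= Q k.
Hypothesis L_antitone : forall i j, (i <= j)%nat -> L j <= L i.
Hypothesis majorized : forall t, (t <= N)%nat -> sumn L t <= sumn Q t.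
Hypothesis sumn_eq : sumn L N = sumn Q N.

(* Abel summation against the nonincreasing weights log2 L; the floor e only matters where L
   vanishes. *)
Lemma sumn_plogp_le_cross :
  sumn (fun k => plogp (L k)) N
  <= sumn (fun k => if Rle_dec (Q k) 0 then 0 else Q k * log2 (L k)) N.
Proof.
  destruct (pos_lower_bound L N) as [e [He HeL]].
  set (a k := log2 (Rmax (L k) e)).
  assert (Habel : 0 <= sumn (fun k => (Q k - L k) * a k) N).
  { apply abel_sumn_nonneg_balanced.
    - intros k k' Hk. apply log2_le; [apply Rlt_le_trans with e; [exact He|apply Rmax_r]|].
      apply Rle_max_compat_r, L_antitone. lia.
    - intros t Ht. rewrite sumn_sub. specialize (majorized t Ht). lra.
    - rewrite sumn_sub. lra. }
  assert (HLa : sumn (fun k => L k * a k) N = sumn (fun k => plogp (L k)) N).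
  { apply sumn_ext. intros k Hk. unfold plogp, a. destruct (Rle_dec (L k) 0).
    - replace (L k) with 0 by (specialize (L_nonneg k); lra). ring.
    - rewrite Rmax_left by (apply HeL; [exact Hk|lra]). reflexivity. }
  assert (HQa : sumn (fun k => Q k * a k) N
                = sumn (fun k => if Rle_dec (Q k) 0 then 0 else Q k * log2 (L k)) N).
  { apply sumn_ext. intros k Hk. unfold a. destruct (Rle_dec (Q k) 0).
    - replace (Q k) with 0 by (specialize (Q_nonneg k); lra). ring.
    - assert (0 < L k) by (apply (majorized_pos N L Q); auto; lra).
      rewrite Rmax_left by (apply HeL; auto). reflexivity. }
  assert (E : sumn (fun k => (Q k - L k) * a k) N
             = sumn (fun k => Q k * a k) N - sumn (fun k => L k * a k) N)
    by (rewrite <- sumn_sub; apply sumn_ext; intros; ring).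
  rewrite E, HQa, HLa in Habel. lra.
Qed.

Lemma relent_le_entropy_diff :
  sumn (fun k => relent_term (Q k) (L k)) N
  <= sumn (fun k => plogp (Q k)) N - sumn (fun k => plogp (L k)) N.
Proof.
  assert (E : sumn (fun k => relent_term (Q k) (L k)) N
             = sumn (fun k => plogp (Q k)) N
               - sumn (fun k => if Rle_dec (Q k) 0 then 0 else Q k * log2 (L k)) N).
  { rewrite <- sumn_sub. apply sumn_ext. intros k Hk. unfold relent_term, plogp.
    destruct (Rle_dec (Q k) 0); [ring|].
    assert (0 < L k) by (apply (majorized_pos N L Q); auto; lra).
    rewrite log2_div by lra. ring. }
  rewrite E. generalize sumn_plogp_le_cross. lra.
Qed.

End EntropyOfMajorized.

Lemma relent_nth N b a : length b = N -> length a = N ->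
  relent b a = sumn (fun k => relent_term (nth k b 0) (nth k a 0)) N.
Proof.
  intros Hb Ha. unfold relent. rewrite (sumR_map_nth (0, 0)), length_combine, Hb, Ha, Nat.min_id.
  apply sumn_ext. intros k Hk. rewrite combine_nth by congruence. reflexivity.
Qed.

(** * Joint distributions with H(Y|X) = 0 *)

(* Y is a function of X: the whole mass Pr[X = i] of a row sits in a single column. *)
Definition row_concentrated m n (P : nat -> nat -> R) : Prop :=
  forall i j, (i < m)%nat -> (j < n)%nat -> 0 < P i j -> P i j = sumn (P i) n.

Lemma mul_log2_ratio_le0 x y : 0 < x -> x <= y -> x * log2 (x / y) <= 0.
Proof.
  intros Hx Hxy. rewrite <- (Rmult_0_r x). apply Rmult_le_compat_l; [lra|].
  apply log2_le0; [apply Rdiv_lt_0_compat; lra|].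
  apply (Rmult_le_reg_r y); [lra|]. unfold Rdiv.
  rewrite Rmult_assoc, Rinv_l; lra.
Qed.

Lemma mul_log2_ratio_eq0 x y : 0 < x -> 0 < y -> x * log2 (x / y) = 0 -> x = y.
Proof.
  intros Hx Hy H. apply Rmult_integral in H as [|H]; [lra|].
  apply log2_eq0 in H; [|apply Rdiv_lt_0_compat; lra].
  apply (Rmult_eq_compat_r y) in H. unfold Rdiv in H.
  rewrite Rmult_assoc, Rinv_l, Rmult_1_r in H; lra.
Qed.

(* Each summand of H(Y|X) is nonpositive, so all of them vanish, which forces P i j = Pr[X = i]. *)
Lemma cond_entropy_eq0_row_concentrated m n P :
  (forall i j, (i < m)%nat -> (j < n)%nat -> 0 <= P i j) -> cond_entropy m n P = 0 ->
  row_concentrated m n P.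
Proof.
  intros HP Hce.
  set (T i j := if Rle_dec (P i j) 0 then 0 else P i j * log2 (P i j / sumn (P i) n)).
  change (- sumn (fun i => sumn (T i) n) m = 0) in Hce.
  assert (HT : forall i j, (i < m)%nat -> (j < n)%nat -> T i j <= 0).
  { intros i j Hi Hj. unfold T. destruct (Rle_dec (P i j) 0); [lra|].
    apply mul_log2_ratio_le0; [lra|]. apply (sumn_term_le (P i)); auto. }
  assert (Hrow : forall i, (i < m)%nat -> sumn (T i) n = 0).
  { apply sumn_eq0_nonpos; [|lra]. intros. apply sumn_nonpos. auto. }
  intros i j Hi Hj HPij.
  assert (HTij := sumn_eq0_nonpos (T i) n (fun j Hj => HT i j Hi Hj) (Hrow i Hi) j Hj).
  unfold T in HTij.
  destruct (Rle_dec (P i j) 0); [lra|].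
  assert (P i j <= sumn (P i) n) by (apply (sumn_term_le (P i)); auto).
  apply mul_log2_ratio_eq0 in HTij; lra.
Qed.

Section Marginals.

Variables (m n : nat) (P : nat -> nat -> R).

Lemma length_marg_X : length (marg_X m n P) = m.
Proof. unfold marg_X. rewrite length_map, length_seq. reflexivity. Qed.

Lemma length_marg_Y : length (marg_Y m n P) = n.
Proof. unfold marg_Y. rewrite length_map, length_seq. reflexivity. Qed.

Hypothesis P_nonneg : forall i j, (i < m)%nat -> (j < n)%nat -> 0 <= P i j.

Lemma marg_X_nonneg x : In x (marg_X m n P) -> 0 <= x.
Proof.
  intros Hx. apply in_map_iff in Hx as [i [<- Hi]]. apply in_seq in Hi.
  apply sumn_nonneg. intros j Hj. apply P_nonneg; lia.
Qed.

Lemma marg_Y_nonneg y : In y (marg_Y m n P) -> 0 <= y.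
Proof.
  intros Hy. apply in_map_iff in Hy as [j [<- Hj]]. apply in_seq in Hj.
  apply sumn_nonneg. intros i Hi. apply P_nonneg; lia.
Qed.

Lemma sumR_marg_Y : sumR (marg_Y m n P) = sumR (marg_X m n P).
Proof. exact (eq_sym (sumn_swap P m n)). Qed.

(* Merging the atoms of a row into one column can only increase a hinge sum, by superadditivity. *)
Lemma sumR_hinge_marg_le c : 0 <= c -> row_concentrated m n P ->
  sumR (map (hinge c) (marg_X m n P)) <= sumR (map (hinge c) (marg_Y m n P)).
Proof.
  intros Hc Hrow. unfold marg_X, marg_Y. rewrite !map_map.
  change (sumn (fun i => hinge c (sumn (P i) n)) m
          <= sumn (fun j => hinge c (sumn (fun i => P i j) m)) n).
  apply Rle_trans with (sumn (fun i => sumn (fun j => hinge c (P i j)) n) m).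
  - apply sumn_le. intros i Hi.
    destruct (Rle_dec (sumn (P i) n) c) as [Hle|Hgt].
    + unfold hinge at 1. rewrite Rmax_left by lra.
      apply sumn_nonneg. intros; apply hinge_nonneg.
    + destruct (sumn_pos_ex (P i) n) as [j [Hj HPij]]; [lra|].
      rewrite <- (Hrow i j Hi Hj HPij).
      apply (sumn_term_le (fun j => hinge c (P i j))); [intros; apply hinge_nonneg|exact Hj].
  - rewrite sumn_swap. apply sumn_le. intros j Hj.
    apply sumn_hinge_le; [exact Hc|]. intros i Hi. apply P_nonneg; auto.
Qed.

End Marginals.

Theorem corollary2 (m n : nat) (P : nat -> nat -> R) :
  is_joint_pmf m n P ->
  cond_entropy m n P = 0 ->
  (forall k, (k < common_len m n)%nat ->
     0 < nth k (qvec m n P) 0 -> 0 < nth k (pvec m n P) 0) /\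
  entropy (marg_X m n P) >=
    entropy (marg_Y m n P) + relent (qvec m n P) (pvec m n P).
Proof.
  intros [HP _] Hce.
  set (N := common_len m n).
  assert (HXN : (length (marg_X m n P) <= N)%nat)
    by (rewrite (length_marg_X m n P); unfold N, common_len; lia).
  assert (HYN : (length (marg_Y m n P) <= N)%nat)
    by (rewrite (length_marg_Y m n P); unfold N, common_len; lia).
  assert (Hmaj := sort_pad_majorized N _ _ (marg_X_nonneg m n P HP) (marg_Y_nonneg m n P HP)
                    HXN HYN (fun c Hc => sumR_hinge_marg_le m n P HP c Hc
                                       (cond_entropy_eq0_row_concentrated m n P HP Hce))).
  assert (Hsum : sumn (fun k => nth k (pvec m n P) 0) N
                 = sumn (fun k => nth k (qvec m n P) 0) N)
    by (unfold pvec, qvec; rewrite !sumn_sort_pad, sumR_marg_Y by assumption; reflexivity).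
  assert (HL := sort_pad_nonneg N _ (marg_X_nonneg m n P HP)).
  assert (HQ := sort_pad_nonneg N _ (marg_Y_nonneg m n P HP)).
  assert (HLanti := sort_pad_antitone N _ (marg_X_nonneg m n P HP)).
  split; [intros k Hk; apply (majorized_pos N _ _ HL HQ HLanti Hmaj Hsum); auto|].
  unfold entropy, pvec, qvec; fold N.
  rewrite !(sumR_map_sort_pad N) by (assumption || apply plogp_0).
  rewrite (relent_nth N) by (apply length_sort_pad; assumption).
  generalize (relent_le_entropy_diff N _ _ HL HQ HLanti Hmaj Hsum). lra.
Qed.
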